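(* For any path $\omega\in\Omega$ that is wCH-random for a computable precise temporal forecasting system $\varphi$: $\big[\liminf_{n\to\infty}\varphi(\omega_{1:n}),\ \limsup_{n\to\infty}\varphi(\omega_{1:n})\big]\subseteq I_\textnormal{wCH}(\omega).$
   Context: $\mathcal{X}=\{0,1\}$; $\Omega=\mathcal{X}^{\mathbb{N}}$ (paths); $\mathbb{S}=\bigcup_{n\ge0}\mathcal X^n$ (situations), $|s|$ length, $\omega_{1:n}=(\omega_1,\dots,\omega_n)$, $\omega_{1:0}$ the empty string. $\mathcal{I}$: nonempty closed intervals $I\subseteq[0,1]$. A forecasting system is $\varphi:\mathbb S\to\mathcal I$, $\underline\varphi=\min\varphi$, $\overline\varphi=\max\varphi$; precise if $\underline\varphi=\overline\varphi$ (then $\varphi(s)$ is identified with the number $\underline\varphi(s)$); temporal if $\varphi(s)=\varphi(t)$ whenever $|s|=|t|$; an interval forecast $I$ is identified with the constant forecasting system $s\mapsto I$. $\varphi$ is computable if there are recursive $\underline q,\overline q:\mathbb S\times\mathbb N_0\to\mathbb Q$ with $|\underline\varphi(s)-\underline q(s,n)|<2^{-n}$ and $|\overline\varphi(s)-\overline q(s,n)|<2^{-n}$. A path $\omega$ is wCH-random for $\varphi$ if for every recursive temporal selection process $S:\mathbb S\to\{0,1\}$ (i.e. $S(s)$ depends only on $|s|$) with $\sum_{k=0}^{n-1}S(\omega_{1:k})\to\infty$: $\liminf_n \frac{\sum_{k<n}S(\omega_{1:k})[\omega_{k+1}-\underline\varphi(\omega_{1:k})]}{\sum_{k<n}S(\omega_{1:k})}\ge0$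 and $\limsup_n \frac{\sum_{k<n}S(\omega_{1:k})[\omega_{k+1}-\overline\varphi(\omega_{1:k})]}{\sum_{k<n}S(\omega_{1:k})}\le0$. $\mathcal I_\textnormal{wCH}(\omega)=\{I\in\mathcal I:\omega\text{ wCH-random for }I\}$, $I_\textnormal{wCH}(\omega)=\bigcap_{I\in\mathcal I_\textnormal{wCH}(\omega)}I$. *)

From HB Require Import structures.
From mathcomp Require Import all_boot all_order all_algebra.
From mathcomp Require Import all_classical all_reals all_analysis.
From Stdlib Require List.
Set Implicit Arguments. Unset Strict Implicit. Unset Printing Implicit Defensive.
Import Order.TTheory GRing.Theory Num.Theory.

(* minimisation.  Missing arguments default to 0.                     *)
Inductive gen_rec : (seq nat -> nat) -> Prop :=
| gr_zero : gen_rec (fun _ => 0%N)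
| gr_succ : gen_rec (fun l => (head 0%N l).+1)
| gr_proj (i : nat) : gen_rec (fun l => nth 0%N l i)
| gr_comp (f : seq nat -> nat) (gs : seq (seq nat -> nat)) :
    gen_rec f -> (forall g, Stdlib.Lists.List.In g gs -> gen_rec g) ->
    gen_rec (fun l => f (map (fun g => g l) gs))
| gr_prec (f g F : seq nat -> nat) :
    gen_rec f -> gen_rec g ->
    F [::] = f [::] ->
    (forall l, F (0%N :: l) = f l) ->
    (forall n l, F (n.+1 :: l) = g (n :: F (n :: l) :: l)) ->
    gen_rec F
| gr_mu (f F : seq nat -> nat) :
    gen_rec f ->
    (forall l, f (F l :: l) = 0%N /\ (forall k, (k < F l)%N -> f (k :: l) <> 0%N)) ->
    gen_rec F.

(* the string b1...bn is coded by the number with binary digits 1b1...bn. *)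
Definition encode_seq (s : seq bool) : nat :=
  foldl (fun acc (b : bool) => (acc.*2 + b)%N) 1%N s.

(* Standard decoding of naturals into rationals (surjective, recursive):
   m+1 = 2^a * (2b+1) gives the pair (a,b); a is read as an integer via
   the zigzag coding and the rational is that integer divided by b+1. *)
Definition decode_pair (m : nat) : nat * nat :=
  let a := logn 2 m.+1 in (a, ((m.+1 %/ 2 ^ a)%N)./2).
Definition zigzag (a : nat) : int :=
  (if odd a then - (a./2.+1)%:Z else (a./2)%:Z)%R.
Definition decode_rat (m : nat) : rat :=
  let p := decode_pair m in ((zigzag p.1)%:~R / (p.2.+1)%:R)%R.

Definition recursive_sel (S : seq bool -> bool) : Prop :=
  exists F, gen_rec F /\ forall s, F [:: encode_seq s] = nat_of_bool (S s).

Definition recursive_rat (q : seq bool -> nat -> rat) : Prop :=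
  exists F, gen_rec F /\ forall s n, decode_rat (F [:: encode_seq s; n]) = q s n.

Section Forecasting.
Variable R : realType.
Local Open Scope ring_scope.
Local Open Scope classical_set_scope.
Import numFieldNormedType.Exports.

(* omega_{1:n} : the first n outcomes (omega_k is  omega (k-1)). *)
Definition path_prefix (w : nat -> bool) (n : nat) : seq bool := mkseq w n.

(* A forecasting system phi : S -> I is represented by its lower and
   upper bounds  lo = underline phi,  hi = overline phi. *)
Definition forecasting_system (lo hi : seq bool -> R) : Prop :=
  forall s, 0 <= lo s /\ lo s <= hi s /\ hi s <= 1.

Definition temporal_fun (T : Type) (f : seq bool -> T) : Prop :=
  forall s t, size s = size t -> f s = f t.

Definition computable_fs (lo hi : seq bool -> R) : Prop :=
  exists ql qh : seq bool -> nat -> rat,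
    recursive_rat ql /\ recursive_rat qh /\
    forall s n, `|lo s - ratr (ql s n)| < 2%:R ^- n /\
                `|hi s - ratr (qh s n)| < 2%:R ^- n.

Definition sel_count (S : seq bool -> bool) (w : nat -> bool) (n : nat) : R :=
  \sum_(k < n) (S (path_prefix w k))%:R.

Definition sel_avg (S : seq bool -> bool) (w : nat -> bool) (f : seq bool -> R)
    (n : nat) : R :=
  (\sum_(k < n) (S (path_prefix w k))%:R * ((w k)%:R - f (path_prefix w k)))
    / sel_count S w n.

Definition wCH_random (lo hi : seq bool -> R) (w : nat -> bool) : Prop :=
  forall S : seq bool -> bool,
    recursive_sel S -> temporal_fun S ->
    sel_count S w @ \oo --> +oo ->
    0 <= limn_inf (sel_avg S w lo) /\ limn_sup (sel_avg S w hi) <= 0.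

Definition interval01 (a b : R) : Prop := 0 <= a /\ a <= b /\ b <= 1.

Definition I_wCH (w : nat -> bool) : set R :=
  [set x | forall a b : R, interval01 a b ->
             wCH_random (fun _ => a) (fun _ => b) w -> a <= x <= b].

End Forecasting.

(* Write c_n := p (omega_{1:n}).  As p is temporal, c_n = p (0^n), so the N-th
   rational approximation of c_n is a recursive function of n.  If a > liminf c,
   take a rational r with liminf c + 2^-N < r < a - 2^-N: the temporal selection
   "select n when the N-th approximation of c_n is below r" is recursive, selects
   infinitely often and only selects forecasts c_n <= a - e for some e > 0.  Along
   it the averages of omega_{k+1} - a stay e below the averages of omega_{k+1} - c_k,
   which is incompatible with randomness for [a, b] (their liminf is >= 0)
   together with randomness for p (the limsup of the latter is <= 0).  The case
   b < limsup c is symmetric. *)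

From HB Require Import structures.
From mathcomp Require Import all_boot all_order all_algebra.
From mathcomp Require Import all_classical all_reals all_analysis.
From mathcomp Require Import lra zify.
Import Order.TTheory GRing.Theory Num.Theory.

Set Implicit Arguments.
Unset Strict Implicit.
Unset Printing Implicit Defensive.

Implicit Types (F G f g h : seq nat -> nat).

Lemma gen_rec_eq F G : gen_rec F -> F =1 G -> gen_rec G.
Proof. by move=> hF /funext <-. Qed.

Lemma gen_rec_comp1 f g : gen_rec f -> gen_rec g -> gen_rec (fun l => f [:: g l]).
Proof. by move=> hf hg; apply: (gr_comp (gs := [:: g]) hf) => g0 [<-|[]]. Qed.

Lemma gen_rec_comp2 f g h : gen_rec f -> gen_rec g -> gen_rec h ->
  gen_rec (fun l => f [:: g l; h l]).
Proof.
by move=> hf hg hh; apply: (gr_comp (gs := [:: g; h]) hf) => g0 [<-|[<-|[]]].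
Qed.

Lemma gen_rec_succ g : gen_rec g -> gen_rec (fun l => (g l).+1).
Proof. exact: gen_rec_comp1 gr_succ. Qed.

Lemma gen_rec_cst k : gen_rec (fun _ => k).
Proof. by elim: k => [|k IHk]; [exact: gr_zero | exact: gen_rec_succ]. Qed.

Definition rec_fun1 (f : nat -> nat) := gen_rec (fun l => f (nth 0 l 0)).
Definition rec_fun2 (f : nat -> nat -> nat) :=
  gen_rec (fun l => f (nth 0 l 0) (nth 0 l 1)).

Lemma rec_fun1_comp (f : nat -> nat) g : rec_fun1 f -> gen_rec g -> gen_rec (fun l => f (g l)).
Proof. exact: gen_rec_comp1. Qed.

Lemma rec_fun2_comp (f : nat -> nat -> nat) g h : rec_fun2 f -> gen_rec g -> gen_rec h ->
  gen_rec (fun l => f (g l) (h l)).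
Proof. exact: gen_rec_comp2. Qed.

Lemma rec_fun2_addn : rec_fun2 addn.
Proof.
apply: (@gr_prec (fun l => nth 0 l 0) (fun l => (nth 0 l 1).+1)) => //.
- exact: gr_proj.
- exact: gen_rec_succ (gr_proj 1).
Qed.

Lemma gen_rec_addn g h : gen_rec g -> gen_rec h -> gen_rec (fun l => g l + h l).
Proof. exact: rec_fun2_comp rec_fun2_addn. Qed.

Lemma rec_fun2_muln : rec_fun2 muln.
Proof.
apply: (@gr_prec (fun => 0) (fun l => nth 0 l 1 + nth 0 l 2)) => //.
- exact: gen_rec_cst.
- exact: gen_rec_addn (gr_proj 1) (gr_proj 2).
- by move=> n l; rewrite /= mulSn addnC.
Qed.

Lemma gen_rec_muln g h : gen_rec g -> gen_rec h -> gen_rec (fun l => g l * h l).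
Proof. exact: rec_fun2_comp rec_fun2_muln. Qed.

Lemma rec_fun1_predn : rec_fun1 predn.
Proof.
by apply: (@gr_prec (fun => 0) (fun l => nth 0 l 0)) => //;
  [exact: gen_rec_cst | exact: gr_proj].
Qed.

Lemma rec_fun2_subn : rec_fun2 subn.
Proof.
have sub_rev : rec_fun2 (fun m n => n - m).
  apply: (@gr_prec (fun l => nth 0 l 0) (fun l => (nth 0 l 1).-1)) => //.
  - exact: gr_proj.
  - exact: rec_fun1_comp rec_fun1_predn (gr_proj 1).
  - by move=> l; rewrite /= subn0.
  - by move=> n l; rewrite /= subnS.
exact: rec_fun2_comp sub_rev (gr_proj 1) (gr_proj 0).
Qed.

Lemma gen_rec_subn g h : gen_rec g -> gen_rec h -> gen_rec (fun l => g l - h l).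
Proof. exact: rec_fun2_comp rec_fun2_subn. Qed.

Lemma rec_fun1_exp2 : rec_fun1 (expn 2).
Proof.
apply: (@gr_prec (fun => 1) (fun l => nth 0 l 1 + nth 0 l 1)) => //.
- exact: gen_rec_cst.
- exact: gen_rec_addn (gr_proj 1) (gr_proj 1).
- by move=> n l; rewrite /= expnS mul2n addnn.
Qed.

Lemma gen_rec_exp2 g : gen_rec g -> gen_rec (fun l => 2 ^ g l).
Proof. exact: rec_fun1_comp rec_fun1_exp2. Qed.

Ltac gen_rec_step := first
  [ assumption | apply: gen_rec_addn | apply: gen_rec_muln | apply: gen_rec_subn
  | apply: gen_rec_exp2 | apply: gen_rec_succ | apply: gr_proj | apply: gen_rec_cst ].
Ltac solve_gen_rec_arith := repeat gen_rec_step.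

(* Each function below is obtained by minimisation: [m./2] is the least [k] with
   [m < 2k + 2], [m %/ 2 ^ k] the least [q] with [m < (q + 1) 2^k], [logn 2 m.+1]
   the least [k] such that [2 ^ k.+1] does not divide [m + 1], and [trunc_log 2 m]
   the least [k] with [m < 2 ^ k.+1]. *)
Lemma rec_fun1_half : rec_fun1 half.
Proof.
apply: (@gr_mu (fun l => (nth 0 l 1).+1 - (nth 0 l 0 + nth 0 l 0 + 2))).
  by solve_gen_rec_arith.
move=> l /=; have := odd_double_half (nth 0 l 0).
by case: odd => /= x_eq; split=> [|k]; lia.
Qed.

Lemma gen_rec_half g : gen_rec g -> gen_rec (fun l => (g l)./2).
Proof. exact: rec_fun1_comp rec_fun1_half. Qed.

Lemma rec_fun2_div_exp2 : rec_fun2 (fun m k => m %/ 2 ^ k).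
Proof.
apply: (@gr_mu (fun l => (nth 0 l 1).+1 - (nth 0 l 0).+1 * 2 ^ nth 0 l 2)).
  by solve_gen_rec_arith.
move=> l /=; set m := nth 0 l 0; set k := nth 0 l 1.
split; first by apply/eqP; rewrite subn_eq0 ltn_ceil // expn_gt0.
move=> q q_lt; apply/eqP; rewrite subn_eq0 -ltnNge ltnS.
by apply: leq_trans (leq_divM m (2 ^ k)); rewrite leq_mul2r q_lt orbT.
Qed.

Lemma gen_rec_div_exp2 g h : gen_rec g -> gen_rec h ->
  gen_rec (fun l => g l %/ 2 ^ h l).
Proof. exact: rec_fun2_comp rec_fun2_div_exp2. Qed.

Lemma rec_fun1_logn2S : rec_fun1 (fun m => logn 2 m.+1).
Proof.
pose modS (l : seq nat) :=
  (nth 0 l 1).+1 - (nth 0 l 1).+1 %/ 2 ^ (nth 0 l 0).+1 * 2 ^ (nth 0 l 0).+1.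
apply: (@gr_mu (fun l => 1 - modS l)).
  by rewrite /modS; repeat first [apply: gen_rec_div_exp2 | gen_rec_step].
move=> l; set m := nth 0 l 0.
have modSE k : modS (k :: l) = m.+1 %% 2 ^ k.+1.
  by rewrite /modS /= {1}(divn_eq m.+1 (2 ^ k.+1)) addKn.
split=> [|k k_lt] /=; rewrite modSE.
  by apply/eqP; rewrite subn_eq0 lt0n -/(dvdn _ _) pfactor_dvdn // ltnn.
by have /eqP -> : m.+1 %% 2 ^ k.+1 == 0 by rewrite -/(dvdn _ _) pfactor_dvdn.
Qed.

Lemma gen_rec_logn2S g : gen_rec g -> gen_rec (fun l => logn 2 (g l).+1).
Proof. exact: rec_fun1_comp rec_fun1_logn2S. Qed.

Lemma rec_fun1_trunc_log2 : rec_fun1 (trunc_log 2).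
Proof.
apply: (@gr_mu (fun l => (nth 0 l 1).+1 - 2 ^ (nth 0 l 0).+1)).
  by solve_gen_rec_arith.
move=> l; set m := nth 0 l 0.
split=> [|k k_lt] /=; apply/eqP; rewrite subn_eq0; first exact: trunc_log_ltn.
have m_gt0 : 0 < m by rewrite lt0n; apply: contraTneq k_lt => ->; rewrite trunc_log0.
by rewrite -ltnNge ltnS (leq_trans _ (trunc_logP (isT : 1 < 2) m_gt0)) // leq_exp2l.
Qed.

Lemma gen_rec_trunc_log2 g : gen_rec g -> gen_rec (fun l => trunc_log 2 (g l)).
Proof. exact: rec_fun1_comp rec_fun1_trunc_log2. Qed.

Lemma gen_rec_odd g : gen_rec g -> gen_rec (fun l => odd (g l)).
Proof.
move=> hg; have hg2 := gen_rec_half hg.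
apply: gen_rec_eq (gen_rec_subn hg (gen_rec_addn hg2 hg2)) _ => l /=.
by have := odd_double_half (g l); rewrite -addnn; lia.
Qed.

Lemma gen_rec_ltn g h : gen_rec g -> gen_rec h -> gen_rec (fun l => g l < h l).
Proof.
move=> hg hh; apply: (gen_rec_eq (gen_rec_subn (gen_rec_cst 1)
  (gen_rec_subn (gen_rec_cst 1) (gen_rec_subn hh hg)))).
by move=> l /=; rewrite -subn_gt0; case: (h l - g l).
Qed.

Ltac solve_gen_rec := repeat first
  [ gen_rec_step | apply: gen_rec_div_exp2 | apply: gen_rec_logn2S
  | apply: gen_rec_trunc_log2 | apply: gen_rec_half | apply: gen_rec_odd ].

Lemma encode_foldl_bounds (s : seq bool) m :
  m * 2 ^ size s <= foldl (fun acc (b : bool) => acc.*2 + b) m s < m.+1 * 2 ^ size s.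
Proof.
elim: s m => [|b s IHs] m /=; first by rewrite !muln1 leqnn ltnSn.
have /andP[lb ub] := IHs (m.*2 + b); rewrite expnS.
by move: lb ub; rewrite -addnn; case: b => /=; nia.
Qed.

Lemma trunc_log_encode_seq s : trunc_log 2 (encode_seq s) = size s.
Proof.
apply: trunc_log_eq => //; have := encode_foldl_bounds s 1.
by rewrite mul1n expnS mul2n -muln2 mulnC.
Qed.

Lemma encode_seq_nseq0 n : encode_seq (nseq n false) = 2 ^ n.
Proof.
suff foldE m : foldl (fun acc (b : bool) => acc.*2 + b) m (nseq n false) = m * 2 ^ n.
  by rewrite /encode_seq foldE mul1n.
by elim: n m => [|n IHn] m /=; rewrite ?expn0 ?muln1 // IHn addn0 -muln2 expnS mulnA.
Qed.

Section Decoding.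
Local Open Scope ring_scope.

Definition int_pos (z : int) : nat := if z is Posz n then n else 0.
Definition int_neg (z : int) : nat := if z is Negz n then n.+1 else 0.

Lemma int_pos_negE z : z = (int_pos z)%:Z - (int_neg z)%:Z.
Proof. by case: z => n; rewrite /= ?subr0 // NegzE sub0r. Qed.

Lemma int_pos_zigzag a : int_pos (zigzag a) = ((1 - odd a) * a./2)%N.
Proof. by rewrite /zigzag; case: odd; rewrite /= ?mul1n. Qed.

Lemma int_neg_zigzag a : int_neg (zigzag a) = (odd a * a./2.+1)%N.
Proof. by rewrite /zigzag; case: odd; rewrite /= ?mul1n. Qed.

Lemma ltr_frac_rat (z : int) (c : nat) (r : rat) :
  (z%:~R / c.+1%:R < r) = (z * denq r < numq r * c.+1%:Z).
Proof.
have den_gt0 : (0 : rat) < (denq r)%:~R by rewrite ltr0z denq_gt0.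
rewrite -[r in LHS]divq_num_den ltr_pdivrMr ?ltr0n // mulrAC ltr_pdivlMr //.
by rewrite [c.+1%:R]pmulrn -!intrM ltr_int.
Qed.

Lemma ltr_rat_frac (z : int) (c : nat) (r : rat) :
  (r < z%:~R / c.+1%:R) = (numq r * c.+1%:Z < z * denq r).
Proof.
have den_gt0 : (0 : rat) < (denq r)%:~R by rewrite ltr0z denq_gt0.
rewrite -[r in LHS]divq_num_den ltr_pdivlMr ?ltr0n // mulrAC ltr_pdivrMr //.
by rewrite [c.+1%:R]pmulrn -!intrM ltr_int.
Qed.

(* Comparing [decode_rat y] with [r] by cross-multiplying, with the negative parts
   of the integers moved to the other side so that both sides are naturals. *)
Definition decode_cross_lhs (r : rat) (y : nat) : nat :=
  let: (a, c) := decode_pair y in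
  (int_pos (zigzag a) * `|denq r| + int_neg (numq r) * c.+1)%N.

Definition decode_cross_rhs (r : rat) (y : nat) : nat :=
  let: (a, c) := decode_pair y in
  (int_pos (numq r) * c.+1 + int_neg (zigzag a) * `|denq r|)%N.

Lemma decode_rat_ltr r y :
  (decode_rat y < r) = (decode_cross_lhs r y < decode_cross_rhs r y)%N.
Proof.
rewrite /decode_rat /decode_cross_lhs /decode_cross_rhs; case: decode_pair => a c /=.
rewrite ltr_frac_rat -{1}[denq r]gez0_abs ?ltW ?denq_gt0 //.
rewrite {1}[zigzag a]int_pos_negE {1}[numq r]int_pos_negE; lia.
Qed.

Lemma ltr_decode_rat r y :
  (r < decode_rat y) = (decode_cross_rhs r y < decode_cross_lhs r y)%N.
Proof.
rewrite /decode_rat /decode_cross_lhs /decode_cross_rhs; case: decode_pair => a c /=.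
rewrite ltr_rat_frac -{1}[denq r]gez0_abs ?ltW ?denq_gt0 //.
rewrite {1}[zigzag a]int_pos_negE {1}[numq r]int_pos_negE; lia.
Qed.

End Decoding.

Lemma gen_rec_int_pos_zigzag g :
  gen_rec g -> gen_rec (fun l => int_pos (zigzag (g l))).
Proof.
by move=> hg; apply: gen_rec_eq (fun l => esym (int_pos_zigzag (g l))); solve_gen_rec.
Qed.

Lemma gen_rec_int_neg_zigzag g :
  gen_rec g -> gen_rec (fun l => int_neg (zigzag (g l))).
Proof.
by move=> hg; apply: gen_rec_eq (fun l => esym (int_neg_zigzag (g l))); solve_gen_rec.
Qed.

Lemma gen_rec_decode_cross r g : gen_rec g ->
  gen_rec (fun l => decode_cross_lhs r (g l)) /\
  gen_rec (fun l => decode_cross_rhs r (g l)).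
Proof.
rewrite /decode_cross_lhs /decode_cross_rhs /decode_pair /= => hg.
by split; repeat first
  [ apply: gen_rec_int_pos_zigzag | apply: gen_rec_int_neg_zigzag | solve_gen_rec ].
Qed.

(* The all-zero situation of length [size s] stands for every situation of that
   length, which loses nothing for temporal forecasts. *)
Definition approx_sel (P : pred rat) (q : seq bool -> nat -> rat) N (s : seq bool) :=
  P (q (nseq (size s) false) N).

Lemma temporal_approx_sel P q N : temporal_fun (approx_sel P q N).
Proof. by move=> s t st; rewrite /approx_sel st. Qed.

Lemma approx_sel_prefix P q N w k :
  approx_sel P q N (path_prefix w k) = P (q (nseq k false) N).
Proof. by rewrite /approx_sel size_mkseq. Qed.

Lemma recursive_approx_sel q N r : recursive_rat q ->
  recursive_sel (approx_sel (fun x => x < r)%R q N) /\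
  recursive_sel (approx_sel (fun x => r < x)%R q N).
Proof.
case=> F [F_rec F_q].
pose G l := F [:: 2 ^ trunc_log 2 (nth 0 l 0); N].
have G_rec : gen_rec G by apply: gen_rec_comp2 => //; solve_gen_rec.
have G_q s : decode_rat (G [:: encode_seq s]) = q (nseq (size s) false) N.
  by rewrite /G /= trunc_log_encode_seq -encode_seq_nseq0 F_q.
have [lhs_rec rhs_rec] := gen_rec_decode_cross r G_rec.
split.
- exists (fun l => decode_cross_lhs r (G l) < decode_cross_rhs r (G l)).
  by split=> [|s]; [exact: gen_rec_ltn | rewrite /approx_sel -G_q decode_rat_ltr].
- exists (fun l => decode_cross_rhs r (G l) < decode_cross_lhs r (G l)).
  by split=> [|s]; [exact: gen_rec_ltn | rewrite /approx_sel -G_q ltr_decode_rat].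
Qed.

Local Open Scope classical_set_scope.
Local Open Scope ring_scope.

Section LimInfSup.
Variable R : realType.
Implicit Types (u v : R^nat) (e : R).

Lemma limn_infD_le_sup u v e N : bounded_fun u -> bounded_fun v ->
  (forall n, (N <= n)%N -> u n + e <= v n) -> limn_inf u + e <= limn_sup v.
Proof.
move=> bu bv uv; rewrite limn_infE // limn_supE // -lerBrDr.
apply: ge_sup; first by exists (infs u 0), 0%N.
move=> _ [m _ <-]; rewrite lerBrDr.
apply: lb_le_inf; first by exists (sups v 0), 0%N.
move=> _ [n _ <-]; pose k := maxn N (maxn m n).
have le_u : infs u m <= u k.
  apply: ge_inf; first exact/has_lbound_sdrop/bounded_fun_has_lbound.
  by exists k => //=; rewrite leq_max leq_maxl orbT.
have le_v : v k <= sups v n.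
  apply: ub_le_sup; first exact/has_ubound_sdrop/bounded_fun_has_ubound.
  by exists k => //=; rewrite !leq_max leqnn !orbT.
by apply: le_trans le_v; apply: le_trans (uv k (leq_maxl _ _)); rewrite lerD2r.
Qed.

Lemma limn_inf_lt_often u e N : bounded_fun u -> 0 < e ->
  exists2 k, (N <= k)%N & u k < limn_inf u + e.
Proof.
move=> bu e_gt0.
have infs_lt : infs u N < limn_inf u + e.
  rewrite limn_infE // ltr_pwDr //.
  apply: ub_le_sup; [exact: bounded_fun_has_ubound_infs | by exists N].
have sdrop_ne : sdrop u N !=set0 by exists (u N), N => /=.
by have [_ [k /= Nk <-] uk] := inf_lt sdrop_ne infs_lt; exists k.
Qed.

Lemma bounded_fun_norm_le u M : (forall n, `|u n| <= M) -> bounded_fun u.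
Proof.
move=> uM; exists M; split=> [|K lt_MK n _]; first exact: num_real.
exact: le_trans (ltW lt_MK).
Qed.

Lemma limn_infN_bounded u : bounded_fun u -> limn_inf (-%R \o u) = - limn_sup u.
Proof.
move=> bu; rewrite /limn_inf infsN limN //; apply/cvg_ex; exists (inf (range (sups u))).
by apply: cvg_sups_inf; [exact: bounded_fun_has_ubound | exact: bounded_fun_has_lbound].
Qed.

Lemma exists_exp2N_lt e : 0 < e -> exists N, 2%:R ^- N < e.
Proof.
move=> e_gt0; exists (Num.truncn e^-1).+1.
rewrite invf_plt ?posrE ?exprn_gt0 // (lt_le_trans (truncnS_gt _)) //.
by rewrite -natrX ler_nat ltnW // ltn_expl.
Qed.

End LimInfSup.

Section SelectionAverages.
Variable R : realType.
Implicit Types (S : seq bool -> bool) (w : nat -> bool).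

Definition selects_infinitely_often S w :=
  forall N, exists2 k, (N <= k)%N & S (path_prefix w k).

Lemma sel_countS S w n :
  sel_count R S w n.+1 = sel_count R S w n + (S (path_prefix w n))%:R.
Proof. by rewrite /sel_count big_ord_recr. Qed.

Lemma sel_count_ge0 S w n : 0 <= sel_count R S w n.
Proof. by apply: sumr_ge0 => k _; rewrite ler0n. Qed.

Lemma nondecreasing_sel_count S w : nondecreasing_seq (sel_count R S w).
Proof. by apply/nondecreasing_seqP => n; rewrite sel_countS lerDl ler0n. Qed.

Lemma sel_count_cvgy S w :
  selects_infinitely_often S w -> sel_count R S w @ \oo --> +oo.
Proof.
move=> S_io; have count_ge m : exists n, m%:R <= sel_count R S w n.
  elim: m => [|m [n le_mn]]; first by exists 0%N; rewrite sel_count_ge0.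
  have [k le_nk Sk] := S_io n; exists k.+1.
  by rewrite sel_countS Sk -natr1 lerD // (le_trans le_mn) // nondecreasing_sel_count.
apply/cvgryPger => A _; have [n le_An] := count_ge (Num.truncn A).+1.
exists n => // m /= le_nm; apply: le_trans (ltW (truncnS_gt A)) _.
by rewrite (le_trans le_An) // nondecreasing_sel_count.
Qed.

Lemma sel_count_gt0 S w n k :
  S (path_prefix w k) -> (k < n)%N -> 0 < sel_count R S w n.
Proof.
move=> Sk lt_kn; apply: lt_le_trans (nondecreasing_sel_count S w lt_kn).
by rewrite sel_countS Sk ltr_pwDr ?ltr01 ?sel_count_ge0.
Qed.

Lemma bounded_sel_avg S w (f : seq bool -> R) :
  (forall s, 0 <= f s <= 1) -> bounded_fun (sel_avg S w f).
Proof.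
move=> f01; apply: (@bounded_fun_norm_le _ _ 1) => n; rewrite /sel_avg normrM normfV.
have [->|count_neq0] := eqVneq (sel_count R S w n) 0.
  by rewrite normr0 invr0 mulr0.
have count_gt0 : 0 < sel_count R S w n by rewrite lt_def count_neq0 sel_count_ge0.
rewrite (ger0_norm (sel_count_ge0 S w n)) ler_pdivrMr // mul1r.
apply: le_trans (ler_norm_sum _ _ _) _; apply: ler_sum => k _.
rewrite normrM ger0_norm ?ler0n //; case: (S _); rewrite ?mul0r // !mul1r.
have /andP[f_ge0 f_le1] := f01 (path_prefix w k).
by rewrite ler_norml; apply/andP; case: (w k); rewrite /= ?mulr1n ?mulr0n; split; lra.
Qed.

Lemma sel_avgD_le S w (f g : seq bool -> R) e n :
  (forall k, S (path_prefix w k) -> f (path_prefix w k) + e <= g (path_prefix w k)) ->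
  0 < sel_count R S w n -> sel_avg S w g n + e <= sel_avg S w f n.
Proof.
move=> fg count_gt0; rewrite /sel_avg -lerBrDl -mulrBl ler_pdivlMr //.
rewrite /sel_count mulr_sumr -sumrB; apply: ler_sum => k _.
have := fg k; case: (S _) => /= fgk; rewrite ?mul0r ?mulr0 ?subrr //.
by rewrite !mul1r mulr1; have := fgk erefl; lra.
Qed.

End SelectionAverages.

Section Thresholds.
Variable R : realType.
Implicit Types (c : R^nat) (qa : nat -> nat -> rat).

Lemma limn_inf_lt_threshold c qa a : bounded_fun c ->
  (forall k N, `|c k - ratr (qa k N)| < 2%:R ^- N) -> limn_inf c < a ->
  exists N r, (forall M, exists2 k, (M <= k)%N & qa k N < r) /\
    exists2 e, 0 < e & forall k, qa k N < r -> c k + e <= a.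
Proof.
move=> c_bounded qa_approx lt_La.
have [N exp_lt] : exists N, 2%:R ^- N < (a - limn_inf c) / 2.
  by apply: exists_exp2N_lt; rewrite divr_gt0 // subr_gt0.
have approxN k := qa_approx k N.
set e := 2%:R ^- N in exp_lt approxN.
have e_gt0 : 0 < e by rewrite invr_gt0 exprn_gt0.
have [r] := @rat_in_itvoo R (limn_inf c + e) (a - e) ltac:(lra).
rewrite in_itv /= => /andP[lt_Lr lt_ra].
exists N, r; split.
- move=> M.
  have [|k le_Mk lt_ck] := limn_inf_lt_often M c_bounded (e := ratr r - e - limn_inf c).
    by lra.
  exists k => //; rewrite -(ltr_rat R).
  by move: (approxN k); rewrite ltr_distlC => /andP[]; lra.
- exists (a - ratr r - e) => [|k]; first lra.
  by rewrite -(ltr_rat R); move: (approxN k); rewrite ltr_distlC => /andP[]; lra.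
Qed.

Lemma limn_sup_gt_threshold c qa b : bounded_fun c ->
  (forall k N, `|c k - ratr (qa k N)| < 2%:R ^- N) -> b < limn_sup c ->
  exists N r, (forall M, exists2 k, (M <= k)%N & r < qa k N) /\
    exists2 e, 0 < e & forall k, r < qa k N -> b + e <= c k.
Proof.
move=> c_bounded qa_approx lt_bU.
have [|k N||N [r [io gap]]] :=
  @limn_inf_lt_threshold (-%R \o c) (fun k N => - qa k N) (- b).
- exact: bounded_funN.
- by rewrite /= rmorphN -opprD normrN; apply: qa_approx.
- by rewrite limn_infN_bounded // ltrN2.
exists N, (- r); split=> [M|].
  by have [k le_Mk] := io M; exists k; rewrite // ltrNl.
have [e e_gt0 gap_e] := gap; exists e => // k; rewrite ltrNl => /gap_e /=; lra.
Qed.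

End Thresholds.

Section SelectionGap.
Variable R : realType.
Implicit Types (lo hi : seq bool -> R).

Lemma wCH_random_selection_gap lo hi lo' hi' w S e :
  (forall s, 0 <= hi s <= 1) -> (forall s, 0 <= lo' s <= 1) ->
  wCH_random lo hi w -> wCH_random lo' hi' w ->
  recursive_sel S -> temporal_fun S -> selects_infinitely_often S w -> 0 < e ->
  ~ (forall k, S (path_prefix w k) -> hi (path_prefix w k) + e <= lo' (path_prefix w k)).
Proof.
move=> hi01 lo'01 rand rand' S_rec S_temp S_io e_gt0 gap.
have count_oo : sel_count R S w @ \oo --> +oo := sel_count_cvgy S_io.
have [_ sup_le0] := rand S S_rec S_temp count_oo.
have [inf_ge0 _] := rand' S S_rec S_temp count_oo.
have [k0 _ Sk0] := S_io 0%N.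
have : limn_inf (sel_avg S w lo') + e <= limn_sup (sel_avg S w hi).
  apply: (@limn_infD_le_sup _ _ _ _ k0.+1); try exact: bounded_sel_avg.
  by move=> n lt_k0n; apply: sel_avgD_le gap _; exact: sel_count_gt0 Sk0 lt_k0n.
lra.
Qed.

End SelectionGap.

Theorem proposition17 (R : realType) (p : seq bool -> R) (w : nat -> bool) :
  forecasting_system p p ->
  temporal_fun p ->
  computable_fs p p ->
  wCH_random p p w ->
  `[limn_inf (fun n => p (path_prefix w n)), limn_sup (fun n => p (path_prefix w n))]
    `<=` I_wCH w.
Proof.
move=> p_fs p_temp [ql [qh [ql_rec [_ approx]]]] p_rand x.
rewrite /= in_itv /= => /andP[le_Lx le_xU] a b [a_ge0 [le_ab b_le1]] ab_rand.
have p01 s : 0 <= p s <= 1.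
  by have [p_ge0 [_ p_le1]] := p_fs s; rewrite p_ge0 (le_trans _ p_le1).
have c_bounded : bounded_fun (fun n => p (path_prefix w n)).
  apply: (@bounded_fun_norm_le _ _ 1) => n.
  by have /andP[p_ge0 p_le1] := p01 (path_prefix w n); rewrite ger0_norm.
have qa_approx k N : `|p (path_prefix w k) - ratr (ql (nseq k false) N)| < 2%:R ^- N.
  rewrite (p_temp _ (nseq k false)) ?size_mkseq ?size_nseq //.
  by case: (approx (nseq k false) N).
apply/andP; split; rewrite leNgt; apply/negP.
- move=> lt_xa.
  have [N [r [io [e e_gt0 gap]]]] :=
    limn_inf_lt_threshold c_bounded qa_approx (le_lt_trans le_Lx lt_xa).
  have [S_rec _] := recursive_approx_sel N r ql_rec.
  apply: (wCH_random_selection_gap p01 _ p_rand ab_rand S_rec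
    (temporal_approx_sel _ _ _) _ e_gt0).
  + by move=> _; rewrite a_ge0 (le_trans le_ab).
  + by move=> M; have [k le_Mk lt_qr] := io M; exists k; rewrite // approx_sel_prefix.
  + by move=> k; rewrite approx_sel_prefix => /gap.
- move=> lt_bx.
  have [N [r [io [e e_gt0 gap]]]] :=
    limn_sup_gt_threshold c_bounded qa_approx (lt_le_trans lt_bx le_xU).
  have [_ S_rec] := recursive_approx_sel N r ql_rec.
  apply: (wCH_random_selection_gap _ p01 ab_rand p_rand S_rec
    (temporal_approx_sel _ _ _) _ e_gt0).
  + by move=> _; rewrite b_le1 andbT (le_trans a_ge0).
  + by move=> M; have [k le_Mk lt_rq] := io M; exists k; rewrite // approx_sel_prefix.
  + by move=> k; rewrite approx_sel_prefix => /gap.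
Qed.
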